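(* For every prime $p$, every $q=p^e$ ($e\ge1$) and every $m\ge2$, we have $\mathrm{Code}_p(\mathrm{AG}_1(m,q))=\mathrm{Code}_p(\mathcal{T}_A(m,q))$ (as subspaces of $\mathbb{F}_p^{X}$, $X=\mathbb{A}^m(\mathbb{F}_q)$).
   Context: $\mathrm{AG}_1(m,q)$ is the block design whose points are the points of $\mathbb{A}^m(\mathbb{F}_q)$ and whose blocks are all affine lines of $\mathbb{A}^m(\mathbb{F}_q)$. $\mathcal{T}_A(m,q)$ is the design with the same point set, obtained by fixing $q$ pairwise parallel hyperplanes $H_1,\dots,H_q$ partitioning $\mathbb{A}^m(\mathbb{F}_q)$ (the groups) and taking as blocks all affine lines not contained in any $H_j$. For a block design $(X,\mathcal{B})$ and prime power $r$, $\mathrm{Code}_r$ of the design is the $\mathbb{F}_r$-linear code $\{c\in\mathbb{F}_r^X:\ \sum_{x\in B}c_x=0\ \forall B\in\mathcal{B}\}$. *)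

From HB Require Import structures.
From mathcomp Require Import all_boot all_order all_algebra all_fingroup all_field.
Set Implicit Arguments. Unset Strict Implicit. Unset Printing Implicit Defensive.
Import GRing.Theory.
Local Open Scope ring_scope.

Definition affine_line (F : finFieldType) (m : nat) (a b : 'rV[F]_m)
  : {set 'rV[F]_m} := [set a + t *: b | t : F].

Definition is_affine_line (F : finFieldType) (m : nat) (L : {set 'rV[F]_m}) : bool :=
  [exists a : 'rV[F]_m, exists b : 'rV[F]_m, (b != 0) && (L == affine_line a b)].

Definition AG1_blocks (F : finFieldType) (m : nat) : {set {set 'rV[F]_m}} :=
  [set L | is_affine_line L].

(* These q hyperplanes are pairwise parallel and partition A^m(F); every
   parallel class of hyperplanes arises this way for some c <> 0. *)
Definition hyperplane (F : finFieldType) (m : nat) (c : 'rV[F]_m) (j : F)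
  : {set 'rV[F]_m} := [set x : 'rV[F]_m | \sum_(i < m) c 0 i * x 0 i == j].

(* Blocks of T_A(m,q) w.r.t. the groups {hyperplane c j | j in F}:
   affine lines not contained in any of the groups. *)
Definition TA_blocks (F : finFieldType) (m : nat) (c : 'rV[F]_m)
  : {set {set 'rV[F]_m}} :=
  [set L | is_affine_line L && ~~ [exists j : F, L \subset hyperplane c j]].

Definition code (p : nat) (X : finType) (B : {set {set X}})
  : {set {ffun X -> 'F_p}} :=
  [set w : {ffun X -> 'F_p} | [forall b in B, \sum_(x in b) w x == 0]].

(* A line inside a group has a direction b with c.b = 0; pick d with c.d <> 0.
   In the plane x + <b, d>, the q lines through x with directions d + s b and
   the q lines u b + <d> (u in F) are all transversal to the groups, so w sums
   to 0 on each of them.  Adding up, the first family covers x with multiplicity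
   q and every point off x + <b> once, the second family covers every point of
   the plane once; the difference of the two totals is therefore the sum of w
   over x + <b> minus q w(x), and q = 0 in F_p. *)

From HB Require Import structures.
From mathcomp Require Import all_boot all_order all_algebra all_fingroup all_field.
Local Open Scope ring_scope.
Import GRing.Theory.
Set Implicit Arguments. Unset Strict Implicit.

Lemma pchar_dvd_card (F : finFieldType) (p : nat) :
  p \in [pchar F] -> (p %| #|F|)%N.
Proof.
move=> charF; rewrite (card_pprimeChar charF).
case: (logn p #|F|) (card_pprimeChar charF) => [|n] /=.
  by rewrite expn0 => F1; have := finNzRing_gt1 F; rewrite F1.
by rewrite expnS dvdn_mulr.
Qed.

Lemma mulrn_card_pchar (F : finFieldType) (R : nzRingType) (p : nat) (y : R) :
  p \in [pchar F] -> p \in [pchar R] -> y *+ #|F| = 0.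
Proof.
move=> charF charR; rewrite -mulr_natr.
by move: (pchar_dvd_card charF); rewrite (dvdn_pcharf charR) => /eqP ->; rewrite mulr0.
Qed.

Section AffineLines.
Variables (F : finFieldType) (m : nat).
Implicit Types (a b c d u x : 'rV[F]_m).

Definition dot c x : F := \sum_(i < m) c 0 i * x 0 i.

Lemma dotr0 c : dot c 0 = 0.
Proof. by rewrite /dot big1 // => i _; rewrite mxE mulr0. Qed.

Lemma dot_neq0_dir_neq0 c u : dot c u != 0 -> u != 0.
Proof. by apply: contraNneq => ->; rewrite dotr0. Qed.

Lemma dotrDZ c x y t : dot c (x + t *: y) = dot c x + t * dot c y.
Proof.
rewrite /dot mulr_sumr -big_split; apply: eq_bigr => i _.
by rewrite !mxE mulrDr mulrCA.
Qed.

Lemma dot_neq0_exists c : c != 0 -> exists d, dot c d != 0.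
Proof.
move=> c_nz; have [i ci] : exists i, c 0 i != 0.
  apply/existsP; apply: contraNT c_nz => /existsPn c0.
  by apply/eqP/rowP => i; rewrite mxE; apply/eqP/negPn/c0.
exists (delta_mx 0 i); rewrite /dot (bigD1 i) //= big1 ?addr0 ?mxE ?eqxx ?mulr1 //.
by move=> k ki; rewrite mxE (negPf ki) andbF mulr0.
Qed.

Lemma affine_line_is_line a u : u != 0 -> is_affine_line (affine_line a u).
Proof. by move=> u_nz; apply/existsP; exists a; apply/existsP; exists u; rewrite u_nz eqxx. Qed.

Lemma big_affine_line (R : nmodType) (w : 'rV[F]_m -> R) a u : u != 0 ->
  \sum_(x in affine_line a u) w x = \sum_(t : F) w (a + t *: u).
Proof.
move=> u_nz; rewrite big_imset /=; first by apply: eq_bigl => t; rewrite inE.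
move=> s t _ _ /addrI /eqP; rewrite -subr_eq0 -scalerBl scaler_eq0 (negPf u_nz).
by rewrite orbF subr_eq0 => /eqP.
Qed.

Lemma dot_dir_sub_hyperplane c a u j :
  affine_line a u \subset hyperplane c j -> dot c u = 0.
Proof.
move=> /subsetP a_sub.
have on_line t : dot c (a + t *: u) = j.
  by apply/eqP; have := a_sub (a + t *: u); rewrite inE; apply; apply/imsetP; exists t.
move: (on_line 1); rewrite dotrDZ mul1r -(on_line 0) scale0r addr0 => /eqP.
by rewrite -subr_eq0 addrC addKr => /eqP.
Qed.

Lemma transversal_line_in_TA c a u :
  dot c u != 0 -> affine_line a u \in TA_blocks c.
Proof.
move=> cu_nz; rewrite inE affine_line_is_line ?(dot_neq0_dir_neq0 cu_nz) //=.
by apply/existsP => -[j /dot_dir_sub_hyperplane]; apply/eqP.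
Qed.

Lemma TA_blocks_sub_AG1 c : TA_blocks c \subset AG1_blocks F m.
Proof. by apply/subsetP => L; rewrite !inE => /andP[]. Qed.

Lemma sum_pencil_plane (R : nmodType) (w : 'rV[F]_m -> R) x b d :
  \sum_(s : F) \sum_(t : F) w (x + t *: (d + s *: b)) + \sum_(u : F) w (x + u *: b) =
  w x *+ #|F| + \sum_(u : F) \sum_(t : F) w (x + u *: b + t *: d).
Proof.
rewrite exchange_big [in RHS]exchange_big /=.
rewrite (bigD1 (0 : F)) //= [in RHS](bigD1 (0 : F)) //=.
have -> : \sum_(s : F) w (x + 0 *: (d + s *: b)) = w x *+ #|F|.
  by rewrite (eq_bigr (fun=> w x)) ?sumr_const // => s _; rewrite scale0r addr0.
have -> : \sum_(u : F) w (x + u *: b + 0 *: d) = \sum_(u : F) w (x + u *: b).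
  by apply: eq_bigr => u _; rewrite scale0r addr0.
rewrite -addrA; congr (_ + _); rewrite addrC; congr (_ + _).
apply: eq_bigr => t t_nz; rewrite [RHS](reindex_inj (mulfI t_nz)) /=.
by apply: eq_bigr => s _; rewrite scalerDr scalerA addrA addrAC.
Qed.

Lemma line_sum_eq0_in_group (R : zmodType) (w : 'rV[F]_m -> R) c x b d :
  (forall y : R, y *+ #|F| = 0) -> dot c b = 0 -> dot c d != 0 ->
  (forall a u, dot c u != 0 -> \sum_(t : F) w (a + t *: u) = 0) ->
  \sum_(u : F) w (x + u *: b) = 0.
Proof.
move=> q_tors cb0 cd_nz transversal0.
have pencil0 : \sum_(s : F) \sum_(t : F) w (x + t *: (d + s *: b)) = 0.
  by apply: big1 => s _; apply: transversal0; rewrite dotrDZ cb0 mulr0 addr0.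
have plane0 : \sum_(u : F) \sum_(t : F) w (x + u *: b + t *: d) = 0.
  by apply: big1 => u _; apply: transversal0.
by have := sum_pencil_plane w x b d; rewrite pencil0 plane0 q_tors !add0r.
Qed.

End AffineLines.

Theorem mainTheorem5 (p : nat) (F : finFieldType) (m : nat)
  (p_prime : prime p) (charF : p \in [pchar F]) (m_ge2 : (2 <= m)%N)
  (c : 'rV[F]_m) (c_nz : c != 0) :
  code p (AG1_blocks F m) = code p (TA_blocks c).
Proof.
(* The argument needs no assumption on m: for m = 1 both block sets are {X}. *)
apply/setP => w; rewrite !inE; apply/forall_inP/forall_inP => w_code L L_block.
  by apply: w_code; apply: subsetP (TA_blocks_sub_AG1 c) _ L_block.
move: L_block; rewrite inE => /existsP[a /existsP[u /andP[u_nz /eqP ->]]].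
have transversal0 a' u' : dot c u' != 0 -> \sum_(t : F) w (a' + t *: u') = 0.
  move=> cu_nz; rewrite -big_affine_line ?(dot_neq0_dir_neq0 cu_nz) //.
  exact/eqP/w_code/transversal_line_in_TA.
rewrite big_affine_line //; apply/eqP.
have [cu0 | cu_nz] := eqVneq (dot c u) 0; last exact: transversal0.
have [d cd_nz] := dot_neq0_exists c_nz.
have q_tors (y : 'F_p) : y *+ #|F| = 0 by apply: mulrn_card_pchar (pchar_Fp p_prime).
exact: line_sum_eq0_in_group q_tors cu0 cd_nz transversal0.
Qed.
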